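(* For $n\ge 2$, let $\mathsf{\Lambda}^2(\mathbb{C}^n)$ be the space of $n\times n$ complex skew-symmetric matrices and $\mu$ the structure tensor of the skew-symmetric matrix-vector product $\mathsf{\Lambda}^2(\mathbb{C}^n)\times\mathbb{C}^n\to\mathbb{C}^n$, $(A,x)\mapsto Ax$. Then $\operatorname{rank}(\mu)\le n^2-n-\lceil (n-1)/2\rceil+1$.
   Context: Structure tensor of a bilinear map $\beta:U\times V\to W$: the unique $\mu_\beta\in U^*\otimes V^*\otimes W$ with $\beta(u,v)=\mu_\beta(u,v,\cdot)$. Rank: least number of decomposable tensors summing to the tensor. *)

(* Complex numbers are modelled by algC (algebraic complex numbers). *)
From HB Require Import structures.
From mathcomp Require Import all_boot all_order all_algebra algC.
Set Implicit Arguments. Unset Strict Implicit. Unset Printing Implicit Defensive.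
Import Order.TTheory GRing.Theory Num.Theory.
Local Open Scope ring_scope.

Definition skewb (n : nat) : pred 'M[algC]_n := fun A => A^T == - A.

Lemma skewb_submod (n : nat) : subsemimod_closed (@skewb n).
Proof.
apply: GRing.submod_closed_semi; split.
  by rewrite unfold_in /skewb /= trmx0 oppr0.
move=> a A B; rewrite !unfold_in /skewb /= => /eqP hA /eqP hB.
by rewrite linearD linearZ /= hA hB scalerN opprD.
Qed.

HB.instance Definition _ (n : nat) := GRing.isSubmodClosed.Build algC 'M[algC]_n (@skewb n)
  (skewb_submod n).

Record skewmx (n : nat) := SkewMx { skval :> 'M[algC]_n; _ : @skewb n skval }.
HB.instance Definition _ (n : nat) := [isSub for @skval n].
HB.instance Definition _ (n : nat) := [Choice of skewmx n by <:].
HB.instance Definition _ (n : nat) := [SubChoice_isSubLmodule of skewmx n by <:].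

Definition lin_functional (F : comPzRingType) (U : lmodType F) (f : U -> F) :=
  forall (a : F) (x y : U), f (a *: x + y) = a * f x + f y.

(* The structure tensor mu_beta in U^* (x) V^* (x) W of a bilinear map beta is a sum of
   r decomposable tensors  f_k (x) g_k (x) w_k  iff
   beta(u,v) = sum_k f_k(u) g_k(v) w_k  for all u, v. *)
Definition struct_tensor_sum_of (F : comPzRingType) (U V W : lmodType F)
    (beta : U -> V -> W) (r : nat) :=
  exists (f : 'I_r -> U -> F) (g : 'I_r -> V -> F) (w : 'I_r -> W),
    [/\ forall k, lin_functional (f k),
        forall k, lin_functional (g k) &
        forall u v, beta u v = \sum_(k < r) (f k u * g k v) *: w k].

Definition struct_tensor_rank_le (F : comPzRingType) (U V W : lmodType F)
    (beta : U -> V -> W) (N : nat) :=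
  exists2 r : nat, (r <= N)%N & struct_tensor_sum_of beta r.

Definition skew_mv (n : nat) (A : skewmx n) (x : 'cV[algC]_n) : 'cV[algC]_n :=
  (skval A) *m x.

(* Skew-symmetry makes every diagonal entry of A vanish, so
   (A x)_k = sum_(j != k) A_kj x_j uses n^2 - n products of an entry of A with a
   coordinate of x.  It also allows pairing the terms (i, j) and (j, i): with
   S_k(A) = sum_j A_kj,
     A x = sum_(i < j) A_ij (x_i + x_j) (e_i - e_j) - sum_k S_k(A) x_k e_k,
   which uses n(n-1)/2 + n products.  The first decomposition meets the bound
   for n = 2, the second one for n >= 3 since (n - 1)(n - 3) >= 0. *)
From Pilot Require Import Defs.
From HB Require Import structures.
From mathcomp Require Import all_boot all_order all_algebra algC zify ring.
Local Open Scope ring_scope.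
Import GRing.Theory Num.Theory.

Set Implicit Arguments.
Unset Strict Implicit.
Unset Printing Implicit Defensive.

Section LinFunctional.
Variables (F : comPzRingType) (U : lmodType F).

Lemma lin_functionalD (f g : U -> F) :
  lin_functional f -> lin_functional g -> lin_functional (fun x => f x + g x).
Proof. by move=> hf hg a x y; rewrite hf hg; ring. Qed.

Lemma lin_functional_sum (I : Type) (r : seq I) (P : pred I) (f : I -> U -> F) :
  (forall i, lin_functional (f i)) ->
  lin_functional (fun x => \sum_(i <- r | P i) f i x).
Proof.
by move=> hf a x y; rewrite mulr_sumr -big_split; apply: eq_bigr => i _; exact: hf.
Qed.

End LinFunctional.

Section StructTensorSum.
Variables (F : comPzRingType) (U V W : lmodType F) (beta : U -> V -> W).

Lemma struct_tensor_sum_of_card (T : finType) (P : {pred T})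
    (f : T -> U -> F) (g : T -> V -> F) (w : T -> W) :
  (forall u v, beta u v = \sum_(t in P) (f t u * g t v) *: w t) ->
  (forall t, lin_functional (f t)) -> (forall t, lin_functional (g t)) ->
  struct_tensor_sum_of beta #|P|.
Proof.
move=> hbeta hf hg.
exists (f \o enum_val), (g \o enum_val), (w \o enum_val).
split=> [k|k|u v]; [exact: hf | exact: hg | by rewrite hbeta big_enum_val].
Qed.

Lemma struct_tensor_sum_ofD (beta1 beta2 : U -> V -> W) (r1 r2 : nat) :
  (forall u v, beta u v = beta1 u v + beta2 u v) ->
  struct_tensor_sum_of beta1 r1 -> struct_tensor_sum_of beta2 r2 ->
  struct_tensor_sum_of beta (r1 + r2).
Proof.
move=> hbeta [f1 [g1 [w1 [hf1 hg1 hb1]]]] [f2 [g2 [w2 [hf2 hg2 hb2]]]].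
pose join T (a : 'I_r1 -> T) (b : 'I_r2 -> T) k :=
  match split k with inl i => a i | inr j => b j end.
exists (join _ f1 f2), (join _ g1 g2), (join _ w1 w2); split.
- by move=> k; rewrite /join; case: split.
- by move=> k; rewrite /join; case: split.
have splitl i : split (lshift r2 i) = inl i := unsplitK (inl i).
have splitr j : split (rshift r1 j) = inr j := unsplitK (inr j).
move=> u v; rewrite hbeta hb1 hb2 big_split_ord /join.
by congr (_ + _); apply: eq_bigr => i _; rewrite ?splitl ?splitr.
Qed.

End StructTensorSum.

Section OrderedPairs.
Variable n : nat.
Implicit Types p : 'I_n * 'I_n.

Let swap p := (p.2, p.1).

Let swap_inj : injective swap.
Proof. by move=> [i j] [k l] [-> ->]. Qed.

Lemma sum_ltn_alternating (R : pzRingType) (M : lmodType R)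
    (H : 'I_n -> 'I_n -> R) (v : 'I_n -> M) :
  (forall i j, H j i = - H i j) -> (forall i, H i i = 0) ->
  \sum_(p : 'I_n * 'I_n | (p.1 < p.2)%N) H p.1 p.2 *: (v p.1 - v p.2) =
  \sum_(p : 'I_n * 'I_n) H p.1 p.2 *: v p.1.
Proof.
move=> Hanti Hdiag.
under eq_bigr do rewrite scalerBr.
rewrite sumrB.
have -> : \sum_(p : 'I_n * 'I_n | (p.1 < p.2)%N) H p.1 p.2 *: v p.2 =
          - \sum_(p : 'I_n * 'I_n | (p.2 < p.1)%N) H p.1 p.2 *: v p.1.
  rewrite (reindex_inj swap_inj) -sumrN.
  by apply: eq_bigr => -[i j] _; rewrite /= Hanti scaleNr.
rewrite opprK [RHS](bigID (fun p : 'I_n * 'I_n => (p.1 < p.2)%N)) /=.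
congr (_ + _); rewrite [RHS](bigID (fun p : 'I_n * 'I_n => (p.2 < p.1)%N)) /=.
rewrite [X in _ + X]big1 ?addr0.
  by apply: eq_bigl => -[i j] /=; case: ltngtP.
by move=> -[i j] /=; case: ltngtP => // /val_inj -> _; rewrite Hdiag scale0r.
Qed.

Lemma card_diag_pairs : #|[pred p : 'I_n * 'I_n | p.1 == p.2]| = n.
Proof.
have diag_inj : injective (fun i : 'I_n => (i, i)) by move=> i j [].
rewrite -[RHS]card_ord -(card_image diag_inj); apply: eq_card => -[i j].
by rewrite inE /=; apply/eqP/imageP => [->|[k _ [-> ->]]]; first exists j.
Qed.

Lemma card_offdiag_pairs :
  #|[pred p : 'I_n * 'I_n | p.1 != p.2]| = (n * n - n)%N.
Proof.
have := cardC [pred p : 'I_n * 'I_n | p.1 == p.2].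
rewrite card_diag_pairs card_prod card_ord => <-; rewrite addKn.
by apply: eq_card => p; rewrite !inE.
Qed.

Lemma card_ltn_pairs :
  (#|[pred p : 'I_n * 'I_n | (p.1 < p.2)%N]| * 2 = n * n - n)%N.
Proof.
have card_gtn : #|[pred p : 'I_n * 'I_n | (p.2 < p.1)%N]| =
                #|[pred p : 'I_n * 'I_n | (p.1 < p.2)%N]|.
  transitivity #|[preim swap of [pred p : 'I_n * 'I_n | (p.1 < p.2)%N]]|.
    exact: eq_card.
  rewrite (card_preim swap_inj).
  apply: (@eq_card _
    (mem [predI codom swap & [pred p : 'I_n * 'I_n | (p.1 < p.2)%N]])) => p.
  by rewrite inE /= (injF_onto swap_inj).
rewrite -card_offdiag_pairs -(cardID [pred p : 'I_n * 'I_n | (p.1 < p.2)%N]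
                                     [pred p : 'I_n * 'I_n | p.1 != p.2]).
rewrite muln2 -addnn -{2}card_gtn.
by congr (_ + _); apply: eq_card => -[i j];
  rewrite !inE /= -val_eqE neq_ltn; case: ltngtP.
Qed.

End OrderedPairs.

Lemma mulmx_col_sum_delta (R : pzRingType) m k (A : 'M[R]_(m, k)) (x : 'cV[R]_k) :
  A *m x = \sum_i (\sum_j A i j * x j 0) *: delta_mx i 0.
Proof.
rewrite [LHS]matrix_sum_delta; apply: eq_bigr => i _.
by rewrite big_ord1 mxE.
Qed.

Lemma lin_functional_mx_entry (R : comPzRingType) m k (i : 'I_m) (j : 'I_k) :
  lin_functional (fun A : 'M[R]_(m, k) => A i j).
Proof. by move=> a A B; rewrite !mxE. Qed.

Section SkewMatrixVectorProduct.
Variable n : nat.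
Implicit Types (A : Defs.skewmx n) (x : 'cV[algC]_n).

Lemma skewmx_entryN A i j : A j i = - A i j.
Proof. by case: A => M /= /eqP/matrixP/(_ i j); rewrite !mxE. Qed.

Lemma skewmx_diag A i : A i i = 0.
Proof.
have /eqP := skewmx_entryN A i i.
by rewrite -addr_eq0 -mulr2n mulrn_eq0 /= => /eqP.
Qed.

Lemma lin_functional_skewmx_entry i j : lin_functional (fun A => A i j).
Proof. by move=> a A B; apply: lin_functional_mx_entry. Qed.

Lemma skew_mv_sum_offdiag A x :
  skew_mv A x = \sum_(p in [pred p : 'I_n * 'I_n | p.1 != p.2])
                  (A p.1 p.2 * x p.2 0) *: delta_mx p.1 0.
Proof.
rewrite /skew_mv mulmx_col_sum_delta.
under eq_bigr do rewrite scaler_suml.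
rewrite pair_big [LHS](bigID [pred p : 'I_n * 'I_n | p.1 != p.2]) /=.
rewrite [X in _ + X]big1 ?addr0 // => -[i j] /negbNE /eqP /= ->.
by rewrite skewmx_diag mul0r scale0r.
Qed.

Lemma skew_mv_sum_triangular A x :
  skew_mv A x =
    \sum_(p in [pred p : 'I_n * 'I_n | (p.1 < p.2)%N])
       (A p.1 p.2 * (x p.1 0 + x p.2 0)) *: (delta_mx p.1 0 - delta_mx p.2 0)
  + \sum_(i in predT) ((\sum_j A i j) * x i 0) *: - delta_mx i 0.
Proof.
rewrite (sum_ltn_alternating (H := fun i j => A i j * (x i 0 + x j 0))
                            (fun i => delta_mx i 0)); first last.
- by move=> i; rewrite skewmx_diag mul0r.
- by move=> i j; rewrite skewmx_entryN; ring.
rewrite /skew_mv mulmx_col_sum_delta.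
rewrite -(pair_big xpredT xpredT (fun i j => (A i j * (x i 0 + x j 0)) *: delta_mx i 0)).
rewrite -big_split; apply: eq_bigr => i _ /=.
rewrite -scaler_suml scalerN -scaleNr -scalerDl; congr (_ *: _).
by rewrite mulr_suml -sumrN -big_split; apply: eq_bigr => j _ /=; ring.
Qed.

Lemma skew_mv_sum_of_offdiag : struct_tensor_sum_of (@skew_mv n) (n * n - n).
Proof.
rewrite -card_offdiag_pairs.
apply: struct_tensor_sum_of_card skew_mv_sum_offdiag _ _ => p.
  exact: lin_functional_skewmx_entry.
exact: lin_functional_mx_entry.
Qed.

Lemma skew_mv_sum_of_triangular :
  struct_tensor_sum_of (@skew_mv n)
    (#|[pred p : 'I_n * 'I_n | (p.1 < p.2)%N]| + n).
Proof.
apply: struct_tensor_sum_ofD skew_mv_sum_triangular _ _.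
  apply: struct_tensor_sum_of_card (fun _ _ => erefl) _ _ => p.
    exact: lin_functional_skewmx_entry.
  by apply: lin_functionalD; apply: lin_functional_mx_entry.
rewrite -[X in struct_tensor_sum_of _ X]card_ord.
apply: struct_tensor_sum_of_card (fun _ _ => erefl) _ _ => i.
  by apply: lin_functional_sum => j; apply: lin_functional_skewmx_entry.
exact: lin_functional_mx_entry.
Qed.

End SkewMatrixVectorProduct.

Theorem mainTheorem17 (n : nat) (hn : (2 <= n)%N) :
  struct_tensor_rank_le (@skew_mv n)
    (n ^ 2 - n - (n - 1).+1./2 + 1)%N.
Proof.
have [->|n_neq2] := eqVneq n 2; first by exists 2%N; last exact: skew_mv_sum_of_offdiag.
exists (#|[pred p : 'I_n * 'I_n | (p.1 < p.2)%N]| + n)%N;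
  last exact: skew_mv_sum_of_triangular.
have n_ge3 : (3 <= n)%N by rewrite ltn_neqAle eq_sym n_neq2 hn.
have n_sq_ge : (4 * n <= n * n + 3)%N by nia.
have := @card_ltn_pairs n; rewrite -divn2 expnS expn1; lia.
Qed.
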